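(* Let $K$ be a number field with ring of integers $\mathcal O_K$. Then the ring $\mathrm{Int}(\mathcal O_K)=\{f\in K[x]: f(\mathcal O_K)\subseteq\mathcal O_K\}$ has no prime element.
   Context: A prime element of a domain is a non-zero non-unit $p$ such that $p\mid ab$ implies $p\mid a$ or $p\mid b$. *)

From HB Require Import structures.
From mathcomp Require Import all_boot all_order all_algebra all_field.
Set Implicit Arguments. Unset Strict Implicit. Unset Printing Implicit Defensive.
Import GRing.Theory.
Local Open Scope ring_scope.

(* A number field is a finite-dimensional field extension K of Q:
   in MathComp, K : fieldExtType rat (finite dimension is built in). *)

Definition in_OK (K : fieldExtType rat) (x : K) : Prop :=
  exists p : {poly int}, p \is monic /\ root (map_poly (fun z : int => z%:~R) p) x.

Definition in_IntOK (K : fieldExtType rat) (f : {poly K}) : Prop :=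
  forall a : K, in_OK a -> in_OK f.[a].

Definition IntOK_dvd (K : fieldExtType rat) (f g : {poly K}) : Prop :=
  exists h : {poly K}, in_IntOK h /\ g = f * h.

Definition IntOK_unit (K : fieldExtType rat) (f : {poly K}) : Prop :=
  exists h : {poly K}, in_IntOK h /\ f * h = 1.

Definition IntOK_prime (K : fieldExtType rat) (p : {poly K}) : Prop :=
  [/\ in_IntOK p, p <> 0, ~ IntOK_unit p &
      forall a b : {poly K}, in_IntOK a -> in_IntOK b ->
        IntOK_dvd p (a * b) -> IntOK_dvd p a \/ IntOK_dvd p b].

(* Fix a Q-basis of K and let N(y) be the determinant of multiplication by y; it is multiplicative and
   integral on O_K, so every nonzero y in O_K divides the positive integer |N(y)|. Since O_K has rank
   [K:Q], pigeonhole on O_K / N O_K gives k and m > 0 with alpha^k (alpha^m - 1) in N O_K for every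
   alpha in O_K, i.e. X^k (X^m - 1) / N lies in Int(O_K).
   A constant prime c would then divide X^k (X^m - 1) = c (X^k (X^m - 1) / N) (N / c), hence X or
   X^m - 1, which makes 1/c integral. For a nonconstant prime p and beta = p(x) != 0, the polynomial
   p^k (p^m - 1) / N is integer-valued and primality cancels p^k, so 1/beta = beta^(m-1) - G(x) N / beta
   with G = (p^m - 1) / N is integral. Then N(p(a)) is 0 or a unit of Z for every natural a, which
   forces p to be constant. *)

From HB Require Import structures.
From mathcomp Require Import all_boot all_order all_algebra all_field.
From mathcomp Require Import zify ring.
Import Order.TTheory GRing.Theory Num.Theory.
Set Implicit Arguments. Unset Strict Implicit. Unset Printing Implicit Defensive.
Local Open Scope ring_scope.

Section IntegralElements.
Variable K : fieldExtType rat.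
Implicit Types x y : K.

Lemma in_OKP x : in_OK x <-> integralOver (intr : {rmorphism int -> K}) x.
Proof. by split=> [[p [mp rp]] | [p mp rp]]; exists p. Qed.

Lemma OKD x y : in_OK x -> in_OK y -> in_OK (x + y).
Proof. by move=> /in_OKP hx /in_OKP hy; apply/in_OKP; apply: integral_add. Qed.

Lemma OKM x y : in_OK x -> in_OK y -> in_OK (x * y).
Proof. by move=> /in_OKP hx /in_OKP hy; apply/in_OKP; apply: integral_mul. Qed.

Lemma OKN x : in_OK x -> in_OK (- x).
Proof. by move=> /in_OKP hx; apply/in_OKP; apply: integral_opp. Qed.

Lemma OKB x y : in_OK x -> in_OK y -> in_OK (x - y).
Proof. by move=> hx hy; apply: OKD => //; apply: OKN. Qed.

Lemma OK_int (z : int) : in_OK (z%:~R : K).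
Proof. by apply/in_OKP; apply: integral_id. Qed.

Lemma OK_nat m : in_OK (m%:R : K).
Proof. by have := OK_int m; rewrite pmulrn. Qed.

Lemma OKX x k : in_OK x -> in_OK (x ^+ k).
Proof.
move=> hx; elim: k => [|k IHk]; first by rewrite expr0; apply: (OK_nat 1).
by rewrite exprS; apply: OKM.
Qed.

Lemma OK_horner (q : {poly int}) x : in_OK x -> in_OK (map_poly intr q).[x].
Proof.
move=> /in_OKP hx; apply/in_OKP; apply: integral_horner => // z /(nthP 0) [i _ <-].
by rewrite coef_map; apply: integral_id.
Qed.

Lemma fieldExt_natr_eq0 (m : nat) : ((m%:R : K) == 0) = (m == 0)%N.
Proof. by rewrite -(rmorph_nat (in_alg K)) fmorph_eq0 pnatr_eq0. Qed.

End IntegralElements.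

Section RegularRepresentation.
Variables (K : fieldExtType rat) (n : nat) (b : n.+1.-tuple K).
Hypothesis b_basis : basis_of {:K} b.
Implicit Types x y : K.

Definition lmulmx y : 'M[rat]_n.+1 := \matrix_(i, j) coord b j (b`_i * y).

Lemma lmulmxD x y : lmulmx (x + y) = lmulmx x + lmulmx y.
Proof. by apply/matrixP=> i j; rewrite !mxE mulrDr linearD. Qed.

Lemma lmulmxZ a y : lmulmx (a *: y) = a *: lmulmx y.
Proof. by apply/matrixP=> i j; rewrite !mxE -scalerAr linearZ. Qed.

Lemma lmulmxM x y : lmulmx (x * y) = lmulmx x *m lmulmx y.
Proof.
apply/matrixP=> i j; rewrite !mxE mulrA.
rewrite {1}(coord_basis b_basis (memvf (b`_i * x))) mulr_suml linear_sum.
by apply: eq_bigr => k _; rewrite !mxE -scalerAl linearZ.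
Qed.

Lemma lmulmx1 : lmulmx 1 = 1%:M.
Proof.
by apply/matrixP=> i j; rewrite !mxE mulr1 coord_free ?(basis_free b_basis) // eq_sym.
Qed.

Lemma lmulmx_alg a : lmulmx a%:A = a%:M.
Proof. by rewrite lmulmxZ lmulmx1 scalemx1. Qed.

Lemma lmulmx0 : lmulmx 0 = 0.
Proof. by rewrite -(scale0r 1) lmulmxZ scale0r. Qed.

Lemma lmulmx_sum I (r : seq I) (P : pred I) (F : I -> K) :
  lmulmx (\sum_(i <- r | P i) F i) = \sum_(i <- r | P i) lmulmx (F i).
Proof. by elim/big_rec2: _ => [|i x y _ <-]; rewrite ?lmulmx0 ?lmulmxD. Qed.

Lemma lmulmx_horner (q : {poly rat}) y :
  lmulmx (map_poly (in_alg K) q).[y] = horner_mx (lmulmx y) q.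
Proof.
elim/poly_ind: q => [|q c IHq]; first by rewrite map_poly0 horner0 rmorph0 lmulmx0.
rewrite rmorphD rmorphM /= map_polyX map_polyC /= hornerD hornerM hornerX hornerC.
by rewrite lmulmxD lmulmxM IHq rmorphD rmorphM /= horner_mx_X horner_mx_C lmulmx_alg.
Qed.

Definition normb y := \det (lmulmx y).

Lemma normbM x y : normb (x * y) = normb x * normb y.
Proof. by rewrite /normb lmulmxM det_mulmx. Qed.

Lemma normb1 : normb 1 = 1.
Proof. by rewrite /normb lmulmx1 det1. Qed.

Lemma normb0 : normb 0 = 0.
Proof. by rewrite /normb lmulmx0 det0. Qed.

Lemma normb_alg a : normb a%:A = a ^+ n.+1.
Proof. by rewrite /normb lmulmx_alg det_scalar. Qed.

Lemma normbV y : y != 0 -> normb y * normb y^-1 = 1.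
Proof. by move=> y0; rewrite -normbM divff // normb1. Qed.

Lemma normb_eq0 y : (normb y == 0) = (y == 0).
Proof.
have [->|y0] := eqVneq y 0; first by rewrite normb0 eqxx.
by apply: contra_neqF (oner_neq0 rat) => ny0; rewrite -(normbV y0) (eqP ny0) mul0r.
Qed.

Lemma lmulmx_eq0 y : lmulmx y = 0 -> y = 0.
Proof. by move=> y0; apply/eqP; rewrite -normb_eq0 /normb y0 det0. Qed.

End RegularRepresentation.

(* The eigenvalues of A are roots of g, hence algebraic integers; so are the coefficients of
   char_poly A, which are also rational. *)
Lemma char_poly_int_of_root m (A : 'M[rat]_m.+1) (g : {poly int}) :
  g \is monic -> horner_mx A (map_poly intr g) = 0 ->
  char_poly A \is a polyOver Num.int.
Proof.
move=> mon_g gA0; pose A' := map_mx (ratr : rat -> algC) A.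
have gA'0 : horner_mx A' (map_poly intr g) = 0.
  rewrite -[map_poly _ g](eq_map_poly (ratr_int algC)) map_poly_comp.
  by rewrite -map_horner_mx gA0 map_mx0.
have [r Dr] := closed_field_poly_normal (char_poly A').
rewrite (monicP (char_poly_monic A')) scale1r in Dr.
have r_Aint z : z \in r -> z \in Aint.
  move=> zr; have : root (char_poly A') z by rewrite Dr root_prod_XsubC.
  rewrite -root_mxminpoly => /(root_dvdp (mxminpoly_min gA'0)) gz.
  apply: (root_monic_Aint gz); first exact: monic_map.
  by apply/polyOverP => i; rewrite coef_map /= rpred_int.
have charA'_Aint : char_poly A' \is a polyOver Aint.
  rewrite Dr; elim: r r_Aint {Dr} => [|z r IHr] r_Aint; first by rewrite big_nil rpred1.
  rewrite big_cons rpredM ?polyOverXsubC ?r_Aint ?mem_head //.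
  by apply: IHr => z' z'r; apply: r_Aint; rewrite inE z'r orbT.
apply/polyOverP => i; have := polyOverP charA'_Aint i.
rewrite /A' -map_char_poly coef_map /= => /(Cint_rat_Aint (Crat_rat _)).
by rewrite Cint_rat.
Qed.

Section NormIntegrality.
Variables (K : fieldExtType rat) (n : nat) (b : n.+1.-tuple K).
Hypothesis b_basis : basis_of {:K} b.
Implicit Types y : K.

Lemma map_poly_intr_alg (q : {poly int}) :
  map_poly (in_alg K) (map_poly intr q) = map_poly intr q.
Proof.
by rewrite -map_poly_comp; apply: eq_map_poly => z /=; rewrite -[RHS](rmorph_int (in_alg K)).
Qed.

Lemma OK_char_poly y : in_OK y -> exists chi : {poly int},
  [/\ chi \is monic, size chi = n.+2, root (map_poly intr chi) y &
      (chi`_0)%:~R = (-1) ^+ n.+1 * normb b y].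
Proof.
case=> g [mon_g gy].
have gA0 : horner_mx (lmulmx b y) (map_poly intr g) = 0.
  by rewrite -lmulmx_horner // map_poly_intr_alg (rootP gy) lmulmx0.
have := char_poly_int_of_root mon_g gA0; set cp := char_poly _ => cp_int.
exists (map_poly (fun x : rat => Num.floor x) cp).
have chiE : map_poly intr (map_poly (fun x : rat => Num.floor x) cp) = cp.
  exact: floorpK.
split.
- apply/monicP/(@intr_inj rat).
  rewrite -lead_coef_map_inj ?mulr0z //; last exact: intr_inj.
  by rewrite chiE; apply/monicP/char_poly_monic.
- by rewrite -(size_map_inj_poly (@intr_inj rat)) // chiE size_char_poly.
- apply/rootP/(lmulmx_eq0 b_basis).
  by rewrite -map_poly_intr_alg chiE lmulmx_horner // Cayley_Hamilton.
- by have := congr1 (fun q : {poly rat} => q`_0) chiE; rewrite coef_map /= char_poly_det => ->.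
Qed.

Lemma normb_int y : in_OK y -> normb b y \is a Num.int.
Proof.
move=> /OK_char_poly [chi [_ _ _ chi0E]].
have -> : normb b y = (-1) ^+ n.+1 * (chi`_0)%:~R.
  by rewrite chi0E mulrA -exprMn mulrNN mulr1 expr1n mul1r.
by rewrite rpredM ?rpred_int // rpredX // rpredN rpred1.
Qed.

(* [y] divides the constant term of its characteristic polynomial, which is a nonzero integer. *)
Lemma OK_nat_div y : in_OK y -> y != 0 ->
  exists N : nat, (0 < N)%N /\ in_OK (N%:R / y).
Proof.
move=> y_OK y0; have [chi [_ _ chi_y chi0E]] := OK_char_poly y_OK.
set c := chi`_0 in chi0E.
have c0 : c != 0.
  apply: contraNneq y0 => c0; rewrite -(normb_eq0 b_basis).
  by move: chi0E; rewrite c0 mulr0z => /esym/eqP; rewrite mulf_eq0 signr_eq0.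
have chiE : chi = c%:P + drop_poly 1 chi * 'X.
  rewrite -{1}(poly_take_drop 1 chi) expr1; congr (_ + _).
  by apply/polyP=> i; rewrite coef_take_poly coefC; case: i.
have c_div_y : in_OK (c%:~R / y).
  move: chi_y => /rootP; rewrite {1}chiE rmorphD rmorphM /= map_polyC map_polyX /=.
  rewrite hornerD hornerM hornerX hornerC => /eqP; rewrite addr_eq0 => /eqP ->.
  by rewrite mulNr mulfK //; apply/OKN/OK_horner.
exists `|c|%N; split; first by rewrite absz_gt0.
have -> : (`|c|%N%:R : K) = (-1) ^+ (c < 0)%R * c%:~R.
  by rewrite pmulrn abszEsign intrM intr_sign.
by rewrite -mulrA; apply: OKM => //; rewrite -intr_sign; apply: OK_int.
Qed.

End NormIntegrality.

Section PowerCongruence.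
Variables (K : fieldExtType rat) (n : nat) (b : n.+1.-tuple K).
Hypothesis b_basis : basis_of {:K} b.
Variable N : nat.
Hypothesis N_gt0 : (0 < N)%N.

Let divN (x : K) := in_OK (x / N%:R).

Let divND x y : divN x -> divN y -> divN (x + y).
Proof. by rewrite /divN mulrDl; apply: OKD. Qed.

Let divNN x : divN x -> divN (- x).
Proof. by rewrite /divN mulNr; apply: OKN. Qed.

Let divNM z x : in_OK z -> divN x -> divN (z * x).
Proof. by rewrite /divN -mulrA; apply: OKM. Qed.

Let N_neq0 : (N : int) != 0.
Proof. by rewrite eqz_nat -lt0n. Qed.

Section Pigeonhole.
Variables (alpha : K) (chi : {poly int}).
Hypotheses (chi_monic : chi \is monic) (size_chi : size chi = n.+2).
Hypotheses (alpha_OK : in_OK alpha) (chi_alpha : root (map_poly intr chi) alpha).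

Lemma divN_pow_sub i j :
  (forall c : 'I_n.+1, (('X^i %% chi)%R`_c == ('X^j %% chi)%R`_c %[mod N])%Z) ->
  divN (alpha ^+ i - alpha ^+ j).
Proof.
move=> eq_mod; pose D := 'X^i %% chi - 'X^j %% chi.
have size_D : (size D <= n.+1)%N.
  have size_mod k : (size ('X^k %% chi)%R <= n.+1)%N by rewrite -ltnS -size_chi ltn_modpN0 ?monic_neq0.
  by rewrite (leq_trans (size_polyD _ _)) // size_polyN geq_max !size_mod.
have D_dvdN : D \is a polyOver (dvdz N).
  apply/polyOverP => c; have [ltcn|] := ltnP c n.+1; last first.
    by move=> lenc; rewrite nth_default ?(leq_trans size_D) // rpred0.
  by rewrite coefB -eqz_mod_dvd (eq_mod (Ordinal ltcn)).
have XiXjE : 'X^i - 'X^j =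
    ('X^i %/ chi - 'X^j %/ chi) * chi + (N : int) *: map_poly (divz^~ (N : int)) D.
  rewrite map_poly_divzK // /D.
  rewrite {1}(Pdiv.IdomainMonic.divp_eq chi_monic 'X^i).
  by rewrite {1}(Pdiv.IdomainMonic.divp_eq chi_monic 'X^j) mulrBl opprD addrACA.
have := congr1 (fun q => (map_poly intr q).[alpha]) XiXjE.
rewrite /= !rmorphB !rmorphD !rmorphM /= !rmorphXn /= !map_polyX map_polyZ.
rewrite !hornerE (rootP chi_alpha) mulr0 add0r /= => ->.
rewrite /divN -pmulrn mulrC mulrA mulVf ?mul1r; first exact: OK_horner.
by rewrite fieldExt_natr_eq0 -lt0n.
Qed.

Definition residue_count := #|{: {ffun 'I_n.+1 -> 'I_N.+1}}|.

(* Pigeonhole on the residues mod N of the coefficients of X^k mod chi, which has degree n + 1. *)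
Lemma exists_divN_pow_sub :
  exists i j, [/\ (i < j)%N, (j <= residue_count)%N & divN (alpha ^+ i - alpha ^+ j)].
Proof.
pose res k c := (('X^k %% chi)%R`_c %% (N : int))%Z.
pose key (k : 'I_residue_count.+1) : {ffun 'I_n.+1 -> 'I_N.+1} :=
  [ffun c : 'I_n.+1 => inord `|res k c|%N].
have [/injectiveP key_inj | /injectivePn [x [y xy kxy]]] := boolP (injectiveb key).
  by have := leq_card _ key_inj; rewrite card_ord ltnn.
have res_ltN k c : (`|res k c|%N < N.+1)%N.
  by rewrite ltnS -lez_nat gez0_abs ?modz_ge0 // ltW // ltz_pmod // ltz_nat.
have xy_mod (c : 'I_n.+1) : (('X^x %% chi)%R`_c == ('X^y %% chi)%R`_c %[mod N])%Z.
  move/ffunP: kxy => /(_ c); rewrite !ffunE => /(congr1 val).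
  rewrite /= !inordK // => /(congr1 Posz).
  by rewrite !gez0_abs ?modz_ge0 // => eq_res; apply/eqP.
have [ltxy|ltyx|/val_inj exy] := ltngtP x y; last by rewrite exy eqxx in xy.
  by exists x, y; split; [|rewrite -ltnS|apply: divN_pow_sub xy_mod].
exists y, x; split; [by []|by rewrite -ltnS|].
by rewrite -opprB; apply/divNN/divN_pow_sub.
Qed.

End Pigeonhole.

Lemma OK_power_congruence : exists k m : nat, (0 < m)%N /\
  forall alpha : K, in_OK alpha -> in_OK (alpha ^+ k * (alpha ^+ m - 1) / N%:R).
Proof.
exists residue_count, residue_count`!; split; first exact: fact_gt0.
move=> alpha alpha_OK; have [chi [mon_chi size_chi chi_alpha _]] := OK_char_poly b_basis alpha_OK.
have [i [j [ltij lejR divN_ij]]] := exists_divN_pow_sub mon_chi size_chi alpha_OK chi_alpha.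
set t := (j - i)%N.
have divN_period s : divN (alpha ^+ (i + s * t) - alpha ^+ i).
  elim: s => [|s IHs]; first by rewrite mul0n addn0 subrr /divN mul0r; apply: (OK_nat _ 0).
  have -> : alpha ^+ (i + s.+1 * t) - alpha ^+ i =
      alpha ^+ t * (alpha ^+ (i + s * t) - alpha ^+ i) + (alpha ^+ j - alpha ^+ i).
    have tij : (t + i = j)%N by rewrite /t; lia.
    by rewrite mulrBr -!exprD tij addrA subrK; congr (_ ^+ _ - _); rewrite /t; lia.
  by apply: divND; [apply: divNM; first apply: OKX | rewrite -opprB; apply: divNN].
have [s fact_st] : exists s, residue_count`! = (s * t)%N.
  by apply/dvdnP/dvdn_fact; rewrite /t; lia.
have -> : alpha ^+ residue_count * (alpha ^+ residue_count`! - 1) =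
    alpha ^+ (residue_count - i) * (alpha ^+ (i + s * t) - alpha ^+ i).
  by rewrite !mulrBr mulr1 -!exprD fact_st; congr (_ ^+ _ - _ ^+ _); lia.
by apply: divNM; [apply: OKX | apply: divN_period].
Qed.

End PowerCongruence.

Definition rev_poly (F : fieldType) (p : {poly F}) :=
  \poly_(l < size p) p`_((size p).-1 - l).

Lemma horner_rev_poly (F : fieldType) (p : {poly F}) (x : F) : x != 0 ->
  (rev_poly p).[x^-1] * x ^+ (size p).-1 = p.[x].
Proof.
move=> x0; rewrite horner_poly horner_coef mulr_suml (reindex_inj rev_ord_inj) /=.
apply: eq_bigr => l _; have := ltn_ord l; move: (nat_of_ord l) => k.
(* The occurrences of [size p] differ in hidden coercions, which [lia] would treat as distinct atoms. *)
set m := size p; clearbody m => ltkm.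
have -> : (m.-1 - (m - k.+1) = k)%N by lia.
have -> : (m.-1 = m - k.+1 + k)%N by lia.
by rewrite exprD -mulrA exprVn mulKf // expf_neq0.
Qed.

Lemma rev_poly_coef0 (F : fieldType) (p : {poly F}) : (rev_poly p)`_0 = lead_coef p.
Proof.
have [->|p0] := eqVneq p 0.
  by rewrite /rev_poly size_poly0 poly_def big_ord0 coef0 lead_coef0.
by rewrite coef_poly size_poly_gt0 p0 subn0 lead_coefE.
Qed.

Lemma int_num_unit_sqr (R : archiNumDomainType) (x y : R) :
  x \is a Num.int -> y \is a Num.int -> x * y = 1 -> x ^+ 2 = 1.
Proof.
move=> x_int y_int xy1.
have x0 : x != 0 by apply: contra_eq_neq xy1 => ->; rewrite mul0r eq_sym oner_neq0.
have y0 : y != 0 by apply: contra_eq_neq xy1 => ->; rewrite mulr0 eq_sym oner_neq0.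
have xy_norm : `|x| * `|y| = 1 by rewrite -normrM xy1 normr1.
have x_ge1 := norm_intr_ge1 x_int x0; have y_ge1 := norm_intr_ge1 y_int y0.
have x_norm : `|x| = 1.
  by apply/eqP; rewrite eq_le x_ge1 andbT -xy_norm ler_peMr // (le_trans ler01).
by rewrite -intr_normK // x_norm expr1n.
Qed.

Lemma poly_eq0_of_roots_inv_nat (R : numFieldType) (f : {poly R}) :
  (forall a : nat, root f (a.+1)%:R^-1) -> f = 0.
Proof.
move=> f_root; pose rs := [seq (i.+1)%:R^-1 | i <- iota 0 (size f)] : seq R.
apply: (@roots_geq_poly_eq0 _ _ rs); last by rewrite size_map size_iota.
  by apply/allP => _ /mapP [i _ ->]; apply: f_root.
rewrite map_inj_uniq ?iota_uniq // => i j /invr_inj /eqP.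
by rewrite eqr_nat => /eqP [].
Qed.

Section NormPolynomial.
Variables (K : fieldExtType rat) (n : nat) (b : n.+1.-tuple K).
Hypothesis b_basis : basis_of {:K} b.

Definition normpoly (f : {poly K}) : {poly rat} :=
  \det (\matrix_(i, j) \poly_(l < size f) lmulmx b f`_l i j).

Lemma horner_normpoly f r : (normpoly f).[r] = normb b f.[r%:A].
Proof.
rewrite /normpoly -horner_evalE -det_map_mx /normb; congr (\det _).
apply/matrixP => i j; rewrite [in RHS]horner_coef lmulmx_sum summxE 2![in LHS]mxE.
transitivity ((\poly_(l < size f) lmulmx b f`_l i j).[r]); first by [].
rewrite horner_poly; apply: eq_bigr => l _.
by rewrite exprZn expr1n mulr_algr lmulmxZ [in RHS]mxE mulrC.
Qed.

Lemma normpoly_rev_poly p (x : rat) : x != 0 ->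
  (normpoly (rev_poly p)).[x^-1] * x ^+ (size p).-1 ^+ n.+1 = normb b p.[x%:A].
Proof.
move=> x0; have xA0 : x%:A != 0 :> K by rewrite scaler_eq0 (negPf x0) oner_eq0.
have normb_pow : normb b (x%:A ^+ (size p).-1) = x ^+ (size p).-1 ^+ n.+1.
  by rewrite exprZn expr1n normb_alg.
rewrite horner_normpoly -normb_pow -normbM // -(horner_rev_poly p xA0).
by rewrite -!in_algE fmorphV.
Qed.

Lemma normb_unit_values (p : {poly K}) (a : nat) : in_IntOK p ->
  (p.[a%:R] != 0 -> in_OK p.[a%:R]^-1) ->
  let v := normb b p.[a%:R] in v * (v ^+ 2 - 1) = 0.
Proof.
move=> p_int p_unit v; have [pa0|pa0] := eqVneq p.[a%:R] 0; first by rewrite /v pa0 normb0 mul0r.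
have pa_OK : in_OK p.[a%:R] by apply/p_int/OK_nat.
have v_int := normb_int b_basis pa_OK; have v'_int := normb_int b_basis (p_unit pa0).
by rewrite (int_num_unit_sqr v_int v'_int (normbV b_basis pa0)) subrr mulr0.
Qed.

(* Otherwise N(p(r)) lies in {0, 1, -1} for every positive integer r, so the reversed norm polynomial Q
   satisfies Q (Q^2 - X^(2 s (n+1))) = 0 at every 1/r; but Q(0) = N(lead_coef p) != 0. *)
Lemma OK_unit_values_const (p : {poly K}) : in_IntOK p ->
  (forall a : nat, p.[a%:R] != 0 -> in_OK p.[a%:R]^-1) -> (size p <= 1)%N.
Proof.
move=> p_int p_units; rewrite leqNgt; apply/negP => size_p.
set s := (size p).-1; set Q := normpoly (rev_poly p).
pose F := Q * (Q ^+ 2 - ('X^s ^+ n.+1) ^+ 2).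
have F_root a : root F (a.+1)%:R^-1.
  have x0 : (a.+1)%:R != 0 :> rat by rewrite pnatr_eq0.
  have := normpoly_rev_poly p x0; rewrite -/s -/Q scaler_nat => QxE.
  have := normb_unit_values p_int (p_units a.+1); rewrite -QxE /root /F !hornerE.
  set q := Q.[_]; set X := _ ^+ s ^+ n.+1 => qX_eq0.
  have X0 : X != 0 by rewrite !expf_neq0.
  rewrite !exprVn -/X.
  have -> : q * (q ^+ 2 - X ^- 2) = q * X * ((q * X) ^+ 2 - 1) / X ^+ 3 by field.
  by rewrite qX_eq0 mul0r.
have F0 := poly_eq0_of_roots_inv_nat F_root.
have Q0 : Q.[0] != 0.
  rewrite /Q horner_normpoly scale0r horner_coef0 rev_poly_coef0 normb_eq0 //.
  by rewrite lead_coef_eq0 -size_poly_gt0 ltnW.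
have s0 : s != 0%N by rewrite /s -subn1 subn_eq0 -ltnNge.
move/(congr1 (horner^~ 0)): F0; rewrite /F !hornerE expr0n (negPf s0) !expr0n /= subr0.
by move=> /eqP; rewrite mulf_eq0 expf_eq0 (negPf Q0) andbF.
Qed.

End NormPolynomial.

Section IntegerValuedPolynomials.
Variable K : fieldExtType rat.
Implicit Types f g : {poly K}.

Lemma IntOKD f g : in_IntOK f -> in_IntOK g -> in_IntOK (f + g).
Proof. by move=> f_int g_int a a_OK; rewrite hornerD; apply: OKD; [apply: f_int | apply: g_int]. Qed.

Lemma IntOKM f g : in_IntOK f -> in_IntOK g -> in_IntOK (f * g).
Proof. by move=> f_int g_int a a_OK; rewrite hornerM; apply: OKM; [apply: f_int | apply: g_int]. Qed.

Lemma IntOKN f : in_IntOK f -> in_IntOK (- f).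
Proof. by move=> f_int a a_OK; rewrite hornerN; apply/OKN/f_int. Qed.

Lemma IntOKB f g : in_IntOK f -> in_IntOK g -> in_IntOK (f - g).
Proof. by move=> f_int g_int; apply: IntOKD => //; apply: IntOKN. Qed.

Lemma IntOKC (c : K) : in_OK c -> in_IntOK c%:P.
Proof. by move=> c_OK a _; rewrite hornerC. Qed.

Lemma IntOK1 : in_IntOK (1 : {poly K}).
Proof. by rewrite -polyC1; apply/IntOKC/(OK_nat K 1). Qed.

Lemma IntOK_polyX : in_IntOK ('X : {poly K}).
Proof. by move=> a a_OK; rewrite hornerX. Qed.

Lemma IntOKX f k : in_IntOK f -> in_IntOK (f ^+ k).
Proof.
move=> f_int; elim: k => [|k IHk]; first by rewrite expr0; apply: IntOK1.
by rewrite exprS; apply: IntOKM.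
Qed.

End IntegerValuedPolynomials.

Lemma fieldExt_basis_tuple (K : fieldExtType rat) :
  exists n (b : n.+1.-tuple K), basis_of {:K} b.
Proof.
have dimK : \dim {:K} = (\dim {:K}).-1.+1 by rewrite prednK ?adim_gt0.
by exists (\dim {:K}).-1, (tcast dimK (vbasis {:K})); rewrite val_tcast vbasisP.
Qed.

Section PrimeElement.
Variables (K : fieldExtType rat) (n : nat) (b : n.+1.-tuple K).
Hypothesis b_basis : basis_of {:K} b.
Variable p : {poly K}.
Hypothesis p_prime : IntOK_prime p.

Let p_int : in_IntOK p. Proof. by case: p_prime. Qed.

Let p_dvdM f g : in_IntOK f -> in_IntOK g -> IntOK_dvd p (f * g) ->
  IntOK_dvd p f \/ IntOK_dvd p g.
Proof. by case: p_prime => _ _ _; apply. Qed.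

Lemma prime_dvd_XnM k f : in_IntOK f -> IntOK_dvd p ('X^k * f) ->
  IntOK_dvd p 'X \/ IntOK_dvd p f.
Proof.
elim: k f => [|k IHk] f f_int; first by rewrite expr0 mul1r; right.
rewrite exprS -mulrA => p_dvd_XXkf.
have Xkf_int : in_IntOK ('X^k * f) by apply: IntOKM => //; apply/IntOKX/IntOK_polyX.
by case: (p_dvdM (@IntOK_polyX K) Xkf_int p_dvd_XXkf) => [|/IHk]; [left | apply].
Qed.

Lemma prime_const_unit : (size p <= 1)%N -> IntOK_unit p.
Proof.
move=> /size1_polyC pE; set c := p`_0 in pE.
have c_OK : in_OK c by have := p_int (OK_nat K 0); rewrite pE hornerC.
have c0 : c != 0 by apply: contraTneq isT => c0; case: p_prime; rewrite pE c0.
suff c_inv_OK : in_OK c^-1.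
  by exists c^-1%:P; split; [apply: IntOKC | rewrite pE -polyCM divff ?polyC1].
have [N [N_gt0 N_div_c]] := OK_nat_div b_basis c_OK c0.
have N0 : (N%:R : K) != 0 by rewrite fieldExt_natr_eq0 -lt0n.
have [k [m [m_gt0 congr_km]]] := OK_power_congruence b_basis N_gt0.
have p_dvd_XkXm : IntOK_dvd p ('X^k * ('X^m - 1)).
  exists ('X^k * ('X^m - 1) * (N%:R^-1)%:P * (N%:R / c)%:P); split.
    apply: IntOKM; last exact: IntOKC.
    by move=> a a_OK; rewrite !hornerE; apply: congr_km.
  have unit_prod : N%:R^-1 * (N%:R / c * c) = 1 by field; rewrite N0 c0.
  by rewrite pE [RHS]mulrC -!mulrA -!polyCM unit_prod mulr1.
have [[h [h_int Xh]] | [h [h_int Xh]]] :=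
  prime_dvd_XnM (IntOKB (IntOKX m (@IntOK_polyX K)) (@IntOK1 K)) p_dvd_XkXm.
  move/(congr1 (horner^~ 1)): Xh; rewrite pE !hornerE => /esym/(canRL (mulKf c0)).
  by rewrite mulr1 => <-; apply/h_int/(OK_nat K 1).
move/(congr1 (horner^~ 0)): Xh; rewrite pE !hornerE expr0n eqn0Ngt m_gt0 sub0r.
move=> /esym/(canRL (mulKf c0)); rewrite mulrN1 => h0E.
by rewrite -[c^-1]opprK -h0E; apply/OKN/h_int/(OK_nat K 0).
Qed.

Section NonConstant.
Hypothesis size_p : (1 < size p)%N.
Variable N : nat.
Hypothesis N_gt0 : (0 < N)%N.

Let N0 : (N%:R : K) != 0. Proof. by rewrite fieldExt_natr_eq0 -lt0n. Qed.

(* p divides N * (p h); it cannot divide the constant N, so it divides p h and h is the cofactor. *)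
Lemma prime_cancel_nat h : in_IntOK (p * h) -> in_IntOK (N%:R%:P * h) -> in_IntOK h.
Proof.
move=> ph_int Nh_int; have p0 : p != 0 by rewrite -size_poly_gt0 ltnW.
have p_dvd_Nph : IntOK_dvd p (N%:R%:P * (p * h)) by exists (N%:R%:P * h); rewrite mulrCA.
have [[g [_ NE]] | [g [g_int phE]]] := p_dvdM (IntOKC (OK_nat K N)) ph_int p_dvd_Nph.
  have g0 : g != 0.
    by apply: contraTneq isT => g0; move: NE; rewrite g0 mulr0 => /eqP; rewrite polyC_eq0 (negPf N0).
  have := congr1 (fun q : {poly K} => size q) NE; rewrite size_polyC N0 size_mul //.
  have := size_poly_gt0 g; rewrite g0; move: size_p.
  by move: (size p) (size g) => sp sg; lia.
by rewrite (mulfI p0 phE).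
Qed.

Lemma prime_cancel_pow j h : in_IntOK (p ^+ j * h) -> in_IntOK (N%:R%:P * h) -> in_IntOK h.
Proof.
elim: j h => [|j IHj] h; first by rewrite expr0 mul1r.
move=> pjh_int Nh_int; apply: IHj => //; apply: prime_cancel_nat; first by rewrite mulrA -exprS.
by rewrite mulrCA; apply: IntOKM => //; apply: IntOKX.
Qed.

End NonConstant.

Lemma prime_value_inv_OK x : (1 < size p)%N -> in_OK x -> p.[x] != 0 -> in_OK p.[x]^-1.
Proof.
move=> size_p x_OK px0; have px_OK := p_int x_OK.
have [N [N_gt0 N_div_px]] := OK_nat_div b_basis px_OK px0.
have N0 : (N%:R : K) != 0 by rewrite fieldExt_natr_eq0 -lt0n.
have [k [m [m_gt0 congr_km]]] := OK_power_congruence b_basis N_gt0.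
pose G := (p ^+ m - 1) * (N%:R^-1)%:P.
have G_int : in_IntOK G.
  apply: (prime_cancel_pow size_p N_gt0 (j := k)).
    by move=> a /p_int/congr_km; rewrite /G !hornerE.
  rewrite /G mulrCA -polyCM divff // polyC1 mulr1.
  by apply: IntOKB; [apply: IntOKX | apply: IntOK1].
have -> : p.[x]^-1 = p.[x] ^+ m.-1 - G.[x] * (N%:R / p.[x]).
  have -> : G.[x] = (p.[x] ^+ m - 1) * N%:R^-1 by rewrite /G !hornerE.
  by rewrite -{2}(prednK m_gt0) exprS; field; rewrite px0 N0.
by apply: OKB; [apply: OKX | apply: OKM; first exact: G_int].
Qed.

Lemma prime_size_le1 : (size p <= 1)%N.
Proof.
apply: contraT; rewrite -ltnNge => size_p.
have := OK_unit_values_const b_basis p_int (fun a => prime_value_inv_OK size_p (OK_nat K a)).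
by rewrite leqNgt size_p.
Qed.

End PrimeElement.

Theorem mainTheorem3 (K : fieldExtType rat) (p : {poly K}) : ~ IntOK_prime p.
Proof.
move=> p_prime; have [_ _ p_nunit _] := p_prime.
have [n [b b_basis]] := fieldExt_basis_tuple K.
exact/p_nunit/(prime_const_unit b_basis p_prime)/(prime_size_le1 b_basis p_prime).
Qed.
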